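(* Let $\mathcal{H}$ be a Hilbert space of finite dimension $d$, let $\mathcal{Z}$ be a finite set, let $\{p_z\}_{z\in\mathcal{Z}}$ be a fixed probability distribution on $\mathcal{Z}$, let $A^{(i)}_z$ ($i=1,\dots,R$, $z\in\mathcal{Z}$) be Hermitian operators on $\mathcal{H}$, and let $b_1,\dots,b_R\in\mathbb{R}$. Define the feasible set $$\mathcal{K}=\Big\{\textstyle\bigoplus_{z\in\mathcal{Z}}\rho_z \;\Big|\; \rho_z\in\mathcal{D}\ \forall z\in\mathcal{Z},\ \ \sum_{z\in\mathcal{Z}}p_z\operatorname{Tr}[A^{(i)}_z\rho_z]=b_i\ \ \forall i\in\{1,\dots,R\}\Big\},$$ viewed as a convex subset of the real vector space $\mathcal{M}=\bigoplus_{z\in\mathcal{Z}}\mathcal{B}(\mathcal{H})$ of block-diagonal matrices. Then every extreme point $\bigoplus_z\rho_z$ of $\mathcal{K}$ has at most $R$ blocks $\rho_z$ that are not pure states (i.e. at most $R$ labels $z$ for which $\rho_z$ is not of the form $|\phi\rangle\langle\phi|$).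
   Context: $\mathcal{D}$ denotes the set of density matrices on $\mathcal{H}$ (Hermitian, positive semi-definite, unit trace operators). An element $\bigoplus_z\rho_z$ is a collection of conditional states, one per label $z$, representing a quantum state ensemble $\{(p_z,\rho_z)\}$ with the probabilities $p_z$ held fixed. An extreme point of a convex set is an element that cannot be written as $\lambda x'+(1-\lambda)x''$ with $\lambda\in(0,1)$ and $x',x''$ in the set unless $x'=x''=x$. *)

From HB Require Import structures.
From mathcomp Require Import all_boot all_order all_algebra.
Set Implicit Arguments. Unset Strict Implicit. Unset Printing Implicit Defensive.
Import Order.TTheory GRing.Theory Num.Theory.
Local Open Scope ring_scope.

(* Complex scalars: an arbitrary numeric algebraically closed field C
   (e.g. algC or complex R); 0 <= x in C means x is real and nonnegative. *)

Definition mxadj (C : numClosedFieldType) m n (A : 'M[C]_(m, n)) : 'M[C]_(n, m) :=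
  \matrix_(i, j) (A j i)^*.

Definition hermitian_mx (C : numClosedFieldType) d (A : 'M[C]_d) : Prop :=
  mxadj A = A.

Definition psd (C : numClosedFieldType) d (A : 'M[C]_d) : Prop :=
  hermitian_mx A /\ forall v : 'cV[C]_d, 0 <= (mxadj v *m A *m v) 0 0.

Definition density (C : numClosedFieldType) d (rho : 'M[C]_d) : Prop :=
  psd rho /\ \tr rho = 1.

Definition pure_state (C : numClosedFieldType) d (rho : 'M[C]_d) : Prop :=
  exists phi : 'cV[C]_d, rho = phi *m mxadj phi.

(* the feasible set K, elements are families (rho_z)_z = block-diagonal ⊕_z rho_z *)
Definition feasible (C : numClosedFieldType) d (Z : finType) (R : nat)
  (p : Z -> C) (A : 'I_R -> Z -> 'M[C]_d) (b : 'I_R -> C)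
  (x : {ffun Z -> 'M[C]_d}) : Prop :=
  (forall z, density (x z)) /\
  (forall i : 'I_R, \sum_(z : Z) p z * \tr (A i z *m x z) = b i).

Definition extreme_point (C : numClosedFieldType) d (Z : finType)
  (K : {ffun Z -> 'M[C]_d} -> Prop) (x : {ffun Z -> 'M[C]_d}) : Prop :=
  K x /\
  forall (lam : C) (x1 x2 : {ffun Z -> 'M[C]_d}),
    lam \is Num.real -> 0 < lam < 1 -> K x1 -> K x2 ->
    x = [ffun z => lam *: x1 z + (1 - lam) *: x2 z] ->
    x1 = x /\ x2 = x.

From HB Require Import structures.
From mathcomp Require Import all_boot all_order all_algebra.
From mathcomp Require Import ring.
Import Order.TTheory GRing.Theory Num.Theory.
Set Implicit Arguments. Unset Strict Implicit. Unset Printing Implicit Defensive.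
Local Open Scope ring_scope.

(* Every mixed density matrix [rho] can be moved along a nonzero traceless
   Hermitian direction by +-1 without leaving the positive cone: choose [u]
   with [u^* rho u > 0] and put [c = rho u]; the direction
   [c c^* - |c|^2 rho] has trace zero, keeps [rho + s H] positive for small
   real [s] by Cauchy-Schwarz, and vanishes only if [rho] is proportional to
   [c c^*], i.e. pure.  If more than [R] blocks of [x] were mixed, the [R]
   real linear constraints restricted to these directions would have a
   nonzero real solution [(c_z)], and [x +- (c_z H_z)_z] would both be
   feasible, contradicting extremality. *)

Section Adjoint.
Variable C : numClosedFieldType.

Lemma mxadj_map m n (A : 'M[C]_(m, n)) : mxadj A = map_mx Num.conj A^T.
Proof. by apply/matrixP => i j; rewrite !mxE. Qed.

Lemma map_conjCK m n (A : 'M[C]_(m, n)) : map_mx Num.conj (map_mx Num.conj A) = A.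
Proof. by apply/matrixP => i j; rewrite !mxE conjCK. Qed.

Lemma mxadjK m n (A : 'M[C]_(m, n)) : mxadj (mxadj A) = A.
Proof. by apply/matrixP => i j; rewrite !mxE conjCK. Qed.

Lemma mxadjD m n (A B : 'M[C]_(m, n)) : mxadj (A + B) = mxadj A + mxadj B.
Proof. by rewrite !mxadj_map linearD map_mxD. Qed.

Lemma mxadjZ m n a (A : 'M[C]_(m, n)) : mxadj (a *: A) = a^* *: mxadj A.
Proof. by rewrite !mxadj_map linearZ map_mxZ. Qed.

Lemma mxadjM m n k (A : 'M[C]_(m, n)) (B : 'M[C]_(n, k)) :
  mxadj (A *m B) = mxadj B *m mxadj A.
Proof. by rewrite !mxadj_map trmx_mul map_mxM. Qed.

Lemma conj_mx11 (M : 'M[C]_1) : (M 0 0)^* = mxadj M 0 0.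
Proof. by rewrite mxE. Qed.

Lemma mxtrace_adj n (A : 'M[C]_n) : \tr (mxadj A) = (\tr A)^*.
Proof. by rewrite rmorph_sum; apply: eq_bigr => i _; rewrite mxE. Qed.

Lemma hermitian_mxD n (A B : 'M[C]_n) :
  hermitian_mx A -> hermitian_mx B -> hermitian_mx (A + B).
Proof. by rewrite /hermitian_mx mxadjD => -> ->. Qed.

Lemma hermitian_mxZ n a (A : 'M[C]_n) :
  a \is Num.real -> hermitian_mx A -> hermitian_mx (a *: A).
Proof. by rewrite /hermitian_mx mxadjZ => /conj_Creal -> ->. Qed.

Lemma hermitian_outer n (c : 'cV[C]_n) : hermitian_mx (c *m mxadj c).
Proof. by rewrite /hermitian_mx mxadjM mxadjK. Qed.

Lemma mxtrace_hermitian_mul_real n (A B : 'M[C]_n) :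
  hermitian_mx A -> hermitian_mx B -> \tr (A *m B) \is Num.real.
Proof. by move=> hA hB; rewrite CrealE -mxtrace_adj mxadjM hA hB mxtrace_mulC. Qed.

Lemma mxtrace_outer n (c : 'cV[C]_n) : \tr (c *m mxadj c) = \sum_i `|c i 0| ^+ 2.
Proof. by apply: eq_bigr => i _; rewrite !mxE big_ord1 mxE normCK. Qed.

End Adjoint.

Section Form.
Variables (C : numClosedFieldType) (n : nat).
Implicit Types (A B : 'M[C]_n) (u v w : 'cV[C]_n).

Definition mxform A u v : C := (mxadj u *m A *m v) 0 0.

Lemma mxformD A B u v : mxform (A + B) u v = mxform A u v + mxform B u v.
Proof. by rewrite /mxform mulmxDr mulmxDl mxE. Qed.

Lemma mxformZ a A u v : mxform (a *: A) u v = a * mxform A u v.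
Proof. by rewrite /mxform -scalemxAr -scalemxAl mxE. Qed.

Lemma mxformDl A u v w : mxform A (u + v) w = mxform A u w + mxform A v w.
Proof. by rewrite /mxform mxadjD !mulmxDl mxE. Qed.

Lemma mxformZl A a u v : mxform A (a *: u) v = a^* * mxform A u v.
Proof. by rewrite /mxform mxadjZ -!scalemxAl mxE. Qed.

Lemma mxformDr A u v w : mxform A u (v + w) = mxform A u v + mxform A u w.
Proof. by rewrite /mxform mulmxDr mxE. Qed.

Lemma mxformZr A a u v : mxform A u (a *: v) = a * mxform A u v.
Proof. by rewrite /mxform -scalemxAr mxE. Qed.

Lemma mxformC A u v : hermitian_mx A -> mxform A v u = (mxform A u v)^*.
Proof.
by move=> hA; rewrite /mxform conj_mx11 !mxadjM mxadjK hA mulmxA.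
Qed.

Lemma mxform_delta A i : mxform A (delta_mx i 0) (delta_mx i 0) = A i i.
Proof.
rewrite /mxform (_ : mxadj _ = delta_mx 0 i); first by rewrite -rowE -colE !mxE.
by apply/matrixP => a b; rewrite !mxE rmorph_nat andbC.
Qed.

Lemma mxform_outer (c : 'cV[C]_n) v :
  mxform (c *m mxadj c) v v = `|(mxadj c *m v) 0 0| ^+ 2.
Proof.
rewrite /mxform mulmxA -mulmxA mxE big_ord1 normCK mulrC.
by rewrite conj_mx11 mxadjM mxadjK.
Qed.

Lemma psd_cauchy_schwarz A u v : psd A -> 0 < mxform A u u ->
  `|mxform A u v| ^+ 2 <= mxform A u u * mxform A v v.
Proof.
move=> [hA psdA] a_gt0; set a := mxform A u u; set g := mxform A u v.
have aJ : a^* = a by apply/geC0_conj/ltW.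
have := psdA (a *: v - g *: u); rewrite -/(mxform A _ _) -scaleNr.
rewrite !(mxformDl, mxformDr, mxformZl, mxformZr) (mxformC u v hA) -/a -/g aJ rmorphN.
move=> ge0; have : 0 <= a * (a * mxform A v v - g * g^*).
  by move: ge0; congr (0 <= _); ring.
by rewrite pmulr_rge0 // subr_ge0 normCK.
Qed.

End Form.

Lemma perturbed_form_ge0 (F : numDomainType) (s t a q g : F) :
  s \is Num.real -> 0 <= t -> 0 <= a -> 0 <= q -> 0 <= g <= a * q ->
  `|s| * (t + a) <= 1 -> 0 <= q + s * (g - t * q).
Proof.
move=> s_real t_ge0 a_ge0 q_ge0 /andP[g_ge0 g_le] s_le.
case: (real_ge0P s_real) => [s_ge0 | s_lt0].
- have st_le1 : s * t <= 1.
    apply: le_trans s_le; rewrite ger0_norm //.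
    by apply: ler_wpM2l; rewrite // lerDl.
  have -> : q + s * (g - t * q) = q * (1 - s * t) + s * g by ring.
  by rewrite addr_ge0 ?mulr_ge0 // subr_ge0.
- have sa_le1 : - s * a <= 1.
    apply: le_trans s_le; rewrite ltr0_norm //.
    by apply: ler_wpM2l; rewrite ?oppr_ge0 ?(ltW s_lt0) // lerDr.
  have -> : q + s * (g - t * q) =
      q * (1 - (- s) * a) + (- s) * (a * q - g) + (- s) * t * q by ring.
  by rewrite !addr_ge0 ?mulr_ge0 ?subr_ge0 // oppr_ge0 ltW.
Qed.

Section OuterDirection.
Variables (C : numClosedFieldType) (n : nat).
Implicit Types (rho : 'M[C]_n) (u v c : 'cV[C]_n).

Definition outer_direction rho u : 'M[C]_n :=
  let c := rho *m u in c *m mxadj c - \tr (c *m mxadj c) *: rho.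

Lemma mxtrace_outer_ge0 c : 0 <= \tr (c *m mxadj c).
Proof. by rewrite mxtrace_outer sumr_ge0 // => i _; rewrite exprn_ge0. Qed.

Lemma mxform_outer_hermitian rho u v : hermitian_mx rho ->
  mxform ((rho *m u) *m mxadj (rho *m u)) v v = `|mxform rho u v| ^+ 2.
Proof. by move=> h_rho; rewrite mxform_outer mxadjM h_rho. Qed.

Lemma hermitian_outer_direction rho u :
  hermitian_mx rho -> hermitian_mx (outer_direction rho u).
Proof.
move=> h_rho; rewrite /outer_direction -scaleNr.
apply: hermitian_mxD; first exact: hermitian_outer.
by apply: hermitian_mxZ => //; rewrite rpredN ger0_real ?mxtrace_outer_ge0.
Qed.

Lemma mxtrace_outer_direction rho u :
  \tr rho = 1 -> \tr (outer_direction rho u) = 0.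
Proof. by rewrite /outer_direction raddfB /= mxtraceZ => ->; rewrite mulr1 subrr. Qed.

Lemma psd_add_outer_direction rho u s :
  psd rho -> 0 < mxform rho u u -> s \is Num.real ->
  `|s| * (\tr (rho *m u *m mxadj (rho *m u)) + mxform rho u u) <= 1 ->
  psd (rho + s *: outer_direction rho u).
Proof.
move=> [h_rho psd_rho] a_gt0 s_real s_le; split.
  exact/hermitian_mxD/hermitian_mxZ/hermitian_outer_direction.
move=> v; rewrite -/(mxform _ v v) mxformD mxformZ /outer_direction mxformD.
rewrite -scaleNr mxformZ mxform_outer_hermitian // mulNr.
apply: perturbed_form_ge0 (mxtrace_outer_ge0 _) (ltW a_gt0) (psd_rho v) _ s_le => //.
by rewrite exprn_ge0 ?psd_cauchy_schwarz.
Qed.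

Lemma pure_state_outer rho c t : 0 < t -> c *m mxadj c = t *: rho -> pure_state rho.
Proof.
move=> t_gt0 ccE; exists ((sqrtC t)^-1 *: c).
rewrite mxadjZ -scalemxAl -scalemxAr scalerA ccE scalerA.
rewrite geC0_conj ?invr_ge0 ?sqrtC_ge0 ?(ltW t_gt0) // -expr2 exprVn sqrtCK.
by rewrite mulVf ?scale1r // gt_eqF.
Qed.

Lemma outer_direction_neq0 rho u : psd rho -> 0 < mxform rho u u ->
  ~ pure_state rho -> outer_direction rho u != 0.
Proof.
move=> [h_rho _] a_gt0 mixed; apply/eqP => dir0; apply: mixed.
set c := rho *m u; set t := \tr (c *m mxadj c).
have ccE : c *m mxadj c = t *: rho by apply/eqP; rewrite -subr_eq0; apply/eqP.
have : `|mxform rho u u| ^+ 2 = t * mxform rho u u.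
  by rewrite -mxformZ -ccE mxform_outer_hermitian.
rewrite ger0_norm ?ltW // expr2 => /(mulIf (lt0r_neq0 a_gt0)) a_eq_t.
by apply: (pure_state_outer _ ccE); rewrite -a_eq_t.
Qed.

Lemma density_diag_gt0 rho : density rho -> exists i, 0 < rho i i.
Proof.
move=> [[_ psd_rho] tr1].
have diag_ge0 i : 0 <= rho i i by rewrite -mxform_delta; exact: psd_rho.
case: (pickP (fun i => 0 < rho i i)) => [i|none]; first by exists i.
move: tr1; rewrite /mxtrace big1 => [/esym/eqP|i _]; first by rewrite oner_eq0.
by have := diag_ge0 i; rewrite le_eqVlt none orbF => /eqP <-.
Qed.

Lemma density_direction rho : density rho -> exists H : 'M[C]_n,
  [/\ hermitian_mx H, \tr H = 0,
      forall s, s \is Num.real -> `|s| <= 1 -> psd (rho + s *: H)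
    & ~ pure_state rho -> H != 0].
Proof.
move=> rho_dens; have [rho_psd tr1] := rho_dens; have [h_rho _] := rho_psd.
have [i rii] := density_diag_gt0 rho_dens.
pose u : 'cV[C]_n := delta_mx i 0.
have a_gt0 : 0 < mxform rho u u by rewrite mxform_delta.
pose k := \tr (rho *m u *m mxadj (rho *m u)) + mxform rho u u.
have k_gt0 : 0 < k by rewrite ltr_wpDl ?mxtrace_outer_ge0.
have k_inv_ge0 : 0 <= k^-1 by rewrite invr_ge0 ltW.
have k_real : k^-1 \is Num.real by rewrite ger0_real.
exists (k^-1 *: outer_direction rho u); split.
- exact/hermitian_mxZ/hermitian_outer_direction.
- by rewrite mxtraceZ mxtrace_outer_direction ?mulr0.
- move=> s s_real s_le1; rewrite scalerA.
  apply: psd_add_outer_direction => //; first by rewrite rpredM.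
  by rewrite normrM [`|k^-1|]ger0_norm // -mulrA mulVf ?mulr1 // lt0r_neq0.
- by move=> mixed; rewrite scaler_eq0 negb_or invr_eq0 gt_eqF // outer_direction_neq0.
Qed.

End OuterDirection.

Section RealKernel.
Variable C : numClosedFieldType.

Lemma real_left_kernel n m (M : 'M[C]_(n, m)) :
  (m < n)%N -> map_mx Num.conj M = M ->
  exists2 w : 'rV[C]_n, w != 0 & w *m M = 0 /\ map_mx Num.conj w = w.
Proof.
move=> lt_mn M_real.
have [u u_nz uM] : exists2 u : 'rV[C]_n, u != 0 & u *m M = 0.
  have /rowV0Pn[u /sub_kermxP uM u_nz] : kermx M != 0.
    by rewrite -mxrank_eq0 mxrank_ker subn_eq0 -ltnNge (leq_ltn_trans (rank_leq_col M)).
  by exists u.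
set ubar := map_mx Num.conj u.
have ubarM : ubar *m M = 0 by rewrite -M_real -map_mxM uM map_mx0.
(* both [u + ubar] and ['i (u - ubar)] are real kernel vectors, and they
   cannot both vanish since their combination [2 u] does not *)
have [re0 | re_nz] := eqVneq (u + ubar) 0; last first.
  exists (u + ubar) => //; split; first by rewrite mulmxDl uM ubarM addr0.
  by rewrite map_mxD map_conjCK addrC.
exists ('i *: (u - ubar)); last split.
- rewrite scaler_eq0 negb_or neq0Ci /=; apply: contraNneq u_nz => im0.
  have : (u + ubar) + (u - ubar) = 0 by rewrite re0 im0 addr0.
  by rewrite addrACA subrr addr0 -mulr2n -scaler_nat => /eqP; rewrite scaler_eq0 pnatr_eq0.
- by rewrite -scalemxAl mulmxBl uM ubarM subrr scaler0.
- by rewrite map_mxZ map_mxB map_conjCK /= conjCi scaleNr -scalerN opprB.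
Qed.

Lemma real_dependence (Z : finType) (S : {set Z}) m (f : Z -> 'I_m -> C) :
  (m < #|S|)%N -> (forall z i, f z i \is Num.real) ->
  exists c : Z -> C, [/\ exists2 z, z \in S & c z != 0,
    forall z, z \notin S -> c z = 0,
    forall z, c z \is Num.real, forall z, `|c z| <= 1 &
    forall i, \sum_z c z * f z i = 0].
Proof.
move=> lt_mS f_real.
have [z0 z0S] : exists z0, z0 \in S by apply/card_gt0P; exact: leq_ltn_trans lt_mS.
pose M := \matrix_(k < #|S|, i < m) f (enum_val k) i.
have M_real : map_mx Num.conj M = M.
  by apply/matrixP => k i; rewrite !mxE conj_Creal.
have [w w_nz [wM w_real]] := real_left_kernel lt_mS M_real.
have wk_real k : w 0 k \is Num.real by rewrite CrealE -{2}w_real mxE.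
pose e := (1 + \sum_k `|w 0 k|)^-1.
have e_gt0 : 0 < e by rewrite invr_gt0 ltr_pwDl ?sumr_ge0.
have ew_le1 k : `|e * w 0 k| <= 1.
  rewrite normrM gtr0_norm // ler_pdivrMl ?mulr1 ?ltr_pwDl ?sumr_ge0 //.
  by rewrite (bigD1 k) //= addrCA lerDl addr_ge0 ?sumr_ge0.
pose c z := if z \in S then e * w 0 (enum_rank_in z0S z) else 0.
have cE k : c (enum_val k) = e * w 0 k by rewrite /c enum_valP enum_valK_in.
exists c; split.
- have [k wk_nz] : exists k, w 0 k != 0.
    apply/existsP; apply: contraNT w_nz; rewrite negb_exists => /forallP w0.
    by apply/eqP/rowP => k; rewrite mxE; apply/eqP/negbNE/w0.
  by exists (enum_val k); rewrite ?enum_valP // cE mulf_neq0 // lt0r_neq0.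
- by move=> z /negbTE zS; rewrite /c zS.
- by move=> z; rewrite /c; case: ifP => _; [rewrite rpredM // ger0_real // ltW | exact: rpred0].
- by move=> z; rewrite /c; case: ifP => _; rewrite ?normr0.
move=> i; rewrite (bigID (mem S)) /= [X in _ + X]big1 ?addr0; last first.
  by move=> z /negbTE zS; rewrite /c zS mul0r.
rewrite big_enum_val /=; transitivity (e * (w *m M) 0 i); last by rewrite wM mxE mulr0.
by rewrite mxE mulr_sumr; apply: eq_bigr => k _; rewrite cE !mxE mulrA.
Qed.

End RealKernel.

Section Feasible.
Variables (C : numClosedFieldType) (d : nat) (Z : finType).

Lemma extreme_point_sym (K : {ffun Z -> 'M[C]_d} -> Prop) x (y : Z -> 'M[C]_d) :
  extreme_point K x -> K [ffun z => x z + y z] -> K [ffun z => x z - y z] ->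
  forall z, y z = 0.
Proof.
move=> [_ ext] Kxy Kx_y z.
have half_real : 2^-1 \is @Num.real C by rewrite rpredV rpred_nat.
have half_in01 : 0 < (2^-1 : C) < 1 by rewrite invr_gt0 ltr0n invf_lt1 ?ltr0n ?ltr1n.
have x_mid : x = [ffun z => 2^-1 *: [ffun z => x z + y z] z
                            + (1 - 2^-1) *: [ffun z => x z - y z] z].
  by apply/ffunP => z'; rewrite !ffunE; apply/matrixP => i j; rewrite !mxE; field.
have [/ffunP/(_ z)] := ext _ _ _ half_real half_in01 Kxy Kx_y x_mid.
by rewrite ffunE -{2}[x z]addr0 => /addrI.
Qed.

Lemma feasible_shift R (p : Z -> C) (A : 'I_R -> Z -> 'M[C]_d) (b : 'I_R -> C)
    x (y : Z -> 'M[C]_d) :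
  feasible p A b x -> (forall z, density (x z + y z)) ->
  (forall i, \sum_z p z * \tr (A i z *m y z) = 0) ->
  feasible p A b [ffun z => x z + y z].
Proof.
move=> [_ Ax] dens_xy Ay; split=> [z | i]; first by rewrite ffunE.
under eq_bigr do rewrite ffunE mulmxDr mxtraceD mulrDr.
by rewrite big_split /= Ax Ay addr0.
Qed.

End Feasible.

Theorem theorem1 (C : numClosedFieldType) (d : nat) (Z : finType) (R : nat)
  (p : Z -> C) (A : 'I_R -> Z -> 'M[C]_d) (b : 'I_R -> C)
  (hp0 : forall z, 0 <= p z) (hp1 : \sum_(z : Z) p z = 1)
  (hA : forall i z, hermitian_mx (A i z))
  (hb : forall i, b i \is Num.real)
  (x : {ffun Z -> 'M[C]_d}) :
  extreme_point (feasible p A b) x ->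
  forall S : {set Z}, (forall z, z \in S -> ~ pure_state (x z)) ->
  (#|S| <= R)%N.
Proof.
move=> x_ext S mixedS; have [x_feas _] := x_ext.
rewrite leqNgt; apply/negP => lt_RS.
have /fin_all_exists[H dirH] z := density_direction (x_feas.1 z).
pose f z i := p z * \tr (A i z *m H z).
have f_real z i : f z i \is Num.real.
  have [hH _ _ _] := dirH z.
  by apply: rpredM; [exact: ger0_real | exact: mxtrace_hermitian_mul_real].
have [c [[z0 z0S cz0] _ c_real c_le1 c_ker]] := real_dependence lt_RS f_real.
pose y z := c z *: H z.
have dens e z : e \is Num.real -> `|e| <= 1 -> density (x z + e *: y z).
  move=> e_real e_le1; have [_ trH psdH _] := dirH z; rewrite scalerA.
  split; first by apply: psdH; rewrite ?rpredM // normrM mulr_ile1.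
  by rewrite mxtraceD mxtraceZ trH mulr0 addr0; case: (x_feas.1 z).
have y_ker i : \sum_z p z * \tr (A i z *m y z) = 0.
  by rewrite -[RHS](c_ker i); apply: eq_bigr => z _; rewrite -scalemxAr mxtraceZ mulrCA.
have x_add_y : feasible p A b [ffun z => x z + y z].
  apply: (feasible_shift x_feas) => // z; rewrite -[y z]scale1r.
  by apply: dens; rewrite ?rpred1 ?normr1.
have x_sub_y : feasible p A b [ffun z => x z - y z].
  apply: (feasible_shift x_feas) => // [z | i].
    by rewrite -scaleN1r; apply: dens; rewrite ?rpredN1 ?normrN1.
  by under eq_bigr do rewrite mulmxN linearN mulrN; rewrite sumrN y_ker oppr0.
have [_ _ _ H_nz] := dirH z0.
have /eqP := extreme_point_sym x_ext x_add_y x_sub_y z0.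
by rewrite scaler_eq0 (negbTE cz0) (negbTE (H_nz (mixedS z0 z0S))).
Qed.
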